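(* Consider the algorithm CCom described in the context. For every epoch index $i\ge0$, let $B_i$, $G_i$ denote the numbers of bad and good IDs in the system at the end of epoch $i$ and $N_i=B_i+G_i$, and assume $B_0<N_0/3$. Then for all $i\ge0$, $B_i<N_i/3$.
   Context: Model. IDs are good (follow the algorithm) or bad (controlled by a single adversary). The adversary controls at most an $\alpha\le 1/6$ fraction of the total computational power, so at each purge it can solve puzzles for fewer than half as many IDs as there are good IDs. Solving a $1$-round computational puzzle (finding suitable hash-function inputs incorporating the ID's public key and a fresh random string) takes one round for a good ID. Algorithm CCom. A committee maintains $\mathcal S_{\mathrm{old}}$ (IDs present after the most recent purge) and $\mathcal S$ (current IDs). Joining IDs solve an entrance puzzle and are added to $\mathcal S$. Whenever $|(\mathcal S\cup\mathcal S_{\mathrm{old}})\setminus(\mathcal S\cap\mathcal S_{\mathrm{old}})|\ge|\mathcal S_{\mathrm{old}}|/3$, a purge occurs: a fresh random string $r$ is broadcast and every ID must return within one round a solution to a $1$-round puzzle whose inputs include its public key and $r$; IDs failing to do so are removed, and $\mathcal S_{\mathrm{old}},\mathcal S$ are reset to the IDs returning valid solutions. Epochs are the periods between consecutive purges; epoch $i$ ends with a purge, and epoch $0$ refers to the initial state. *)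

From mathcomp Require Import all_boot all_order all_algebra.
Set Implicit Arguments. Unset Strict Implicit. Unset Printing Implicit Defensive.
Import Order.TTheory GRing.Theory Num.Theory.

(* Model of algorithm CCom.  IDs range over a finite universe [T];
   [good x] says whether ID x is good (otherwise it is bad, i.e. controlled by
   the adversary).  Sets of IDs are [{set T}]. *)
Section CCom.
Variables (T : finType) (good : pred T).

Definition goods (S : {set T}) : {set T} := [set x in S | good x].
Definition bads  (S : {set T}) : {set T} := [set x in S | ~~ good x].

Definition purge_trigger (Sold S : {set T}) : bool :=
  #|Sold| <= 3 * #|(S :|: Sold) :\: (S :&: Sold)|.

(* A purge applied to the current set S yields the new set S' :
   - every good ID solves its 1-round puzzle in time, so all good IDs of S
     survive (and no others: the good IDs of S' are exactly those of S);
   - the surviving bad IDs are IDs of S for which the adversary solved the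
     puzzle; since the adversary has at most a 1/6 fraction of the power it
     can do so for fewer than half as many IDs as there are good IDs. *)
Definition purge_ok (S S' : {set T}) : Prop :=
  [/\ goods S' = goods S,
      bads S' \subset bads S &
      2 * #|bads S'| < #|goods S|].

(* An infinite execution of CCom.  [Sold i] is the set of IDs in the system at
   the end of epoch i (right after its purge; [Sold 0] is the initial state).
   [Scur i] is the sequence of successive values of the current set S during
   epoch i+1 (after each join/departure event; S starts equal to [Sold i]);
   the purge ending epoch i+1 happens at the first of these values for which
   the trigger condition holds, i.e. at the last element of [Scur i]. *)
Record execution := Execution {
  Sold : nat -> {set T};
  Scur : nat -> seq {set T};
  Scur_nonempty : forall i, Scur i != [::];
  trigger_first : forall i k, k < (size (Scur i)).-1 ->
                   ~~ purge_trigger (Sold i) (nth set0 (Scur i) k);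
  trigger_last : forall i, purge_trigger (Sold i) (last (Sold i) (Scur i));
  purge_step : forall i, purge_ok (last (Sold i) (Scur i)) (Sold i.+1)
}.

Definition Bn (e : execution) (i : nat) : nat := #|bads (Sold e i)|.
Definition Gn (e : execution) (i : nat) : nat := #|goods (Sold e i)|.
Definition Nn (e : execution) (i : nat) : nat := Bn e i + Gn e i.

End CCom.

(* A good ID always survives a purge while the adversary keeps fewer than half
   as many bad IDs as there are good ones, so right after every purge
   2B < G, which is B < N/3.  Epoch 0 is covered by the hypothesis. *)
From mathcomp Require Import all_boot all_order all_algebra.
From mathcomp Require Import zify.
Import Order.TTheory GRing.Theory Num.Theory.
Local Open Scope ring_scope.

Lemma ltr_third_sum_nat (R : numFieldType) (b g : nat) :
  (b%:R < (b + g)%:R / 3 :> R) = (2 * b < g)%N.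
Proof. by rewrite ltr_pdivlMr // -natrM ltr_nat; apply/idP/idP; lia. Qed.

Lemma purge_ok_bads_lt_half_goods (T : finType) (good : pred T) (S S' : {set T}) :
  purge_ok good S S' -> (2 * #|bads good S'| < #|goods good S'|)%N.
Proof. by case=> goodsE _ lt_bads; rewrite goodsE. Qed.

Lemma Bn_lt_half_Gn_succ (T : finType) (good : pred T) (e : execution good) (i : nat) :
  (2 * Bn e i.+1 < Gn e i.+1)%N.
Proof. exact: purge_ok_bads_lt_half_goods (purge_step e i). Qed.

Theorem lemma2 (T : finType) (good : pred T) (e : execution good) :
  ((Bn e 0)%:R < (Nn e 0)%:R / 3 :> rat) ->
  forall i : nat, ((Bn e i)%:R < (Nn e i)%:R / 3 :> rat).
Proof.
move=> B0_lt [|i] //.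
by rewrite /Nn ltr_third_sum_nat Bn_lt_half_Gn_succ.
Qed.
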